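(* Let $n\ge1$ be an integer, $b_a>0$, $b_v>0$, $c>0$, and consider the system on $[0,1]^2$ $$\dot p=p(1-p)\Big(\frac{b_a}{n+1}-q(b_v-c)\Big),\qquad \dot q=q(1-q)\Big(\frac{b_v}{n+1}\sum_{k=0}^n p^k-c\Big),$$ with initial condition $p(0),q(0)\in(0,1)$. (i) If $b_a>(b_v-c)(n+1)$, then $p(t)\to 1$ (the population converges to all glycolytic). (ii) If $b_a<(b_v-c)(n+1)$ and $b_v>c(n+1)$, then $q(t)\to1$ and $p(t)\to0$ (the population converges to all VEGF (over)producers).
   Context: This system is the replicator dynamics of the double goods game in factored form: $p$ is the proportion of glycolytic cells and $q$ the proportion of VEGF (over)producers among the aerobic cells; $b_a$ is the benefit per unit of acidification, $b_v$ the benefit per unit of vascularization, $c$ the cost of (over)producing VEGF, and $n$ the number of interaction partners. *)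

From Stdlib Require Import Reals.
From Coquelicot Require Import Coquelicot.
Open Scope R_scope.

Definition p_rhs (n : nat) (ba bv c p q : R) : R :=
  p * (1 - p) * (ba / INR (n + 1) - q * (bv - c)).

(* sum_f_R0 f n = f 0 + ... + f n, i.e. sum_{k=0}^n p^k *)
Definition q_rhs (n : nat) (ba bv c p q : R) : R :=
  q * (1 - q) * (bv / INR (n + 1) * sum_f_R0 (fun k => p ^ k) n - c).

Definition is_solution (n : nat) (ba bv c : R) (p q : R -> R) : Prop :=
  filterlim p (at_right 0) (locally (p 0)) /\
  filterlim q (at_right 0) (locally (q 0)) /\
  (forall t, 0 < t -> is_derive p t (p_rhs n ba bv c (p t) (q t))) /\
  (forall t, 0 < t -> is_derive q t (q_rhs n ba bv c (p t) (q t))).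

(** Each equation has the logistic form [x' = x (1 - x) g(t)] with [g]
    continuous, so an integrating factor shows that [x] and [1 - x] never
    vanish: both frequencies stay in (0,1).  A logistic variable whose rate
    [g] is eventually bounded below by [m > 0] is eventually nondecreasing,
    and while [x <= 1 - eps] it grows at least linearly, so it tends to 1.
    (i) The rate of [p] is [ba/(n+1) - q (bv - c)], a convex combination of
    [ba/(n+1)] and [ba/(n+1) - (bv - c)], both positive.  (ii) The rate of [q]
    is at least [bv/(n+1) - c > 0] since [sum_k p^k >= 1]; hence [q -> 1], after
    which the rate of [1 - p], namely [q (bv - c) - ba/(n+1)], is eventually
    positive, so [1 - p -> 1]. *)

From Stdlib Require Import Reals Psatz.
From Coquelicot Require Import Coquelicot.
Open Scope R_scope.

Lemma at_right_0_unit_interval (x : R -> R) :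
  filterlim x (at_right 0) (locally (x 0)) -> 0 < x 0 < 1 ->
  exists t0, 0 < t0 /\ 0 < x t0 < 1.
Proof.
  intros Hx Hx0.
  assert (Hunit : locally (x 0) (fun y => 0 < y < 1))
    by exact (open_and _ _ (open_gt 0) (open_lt 1) (x 0) Hx0).
  destruct (Hx _ Hunit) as [d Hd].
  exists (d / 2). pose proof (cond_pos d).
  split; [lra |]. apply Hd; [| lra].
  cbn. unfold ball; cbn. unfold AbsRing_ball, abs, minus, plus, opp; cbn.
  rewrite Ropp_0, Rplus_0_r, Rabs_right by lra. lra.
Qed.

Lemma is_derive_continuous (f : R -> R) t l : is_derive f t l -> continuous f t.
Proof.
  intro Hf. apply (ex_derive_continuous (K := R_AbsRing) (V := R_NormedModule)).
  now exists l.
Qed.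

Lemma continuous_geom_sum (x : R -> R) t n :
  continuous x t -> continuous (fun s => sum_f_R0 (fun k => x s ^ k) n) t.
Proof.
  intro Hx.
  assert (Hpow : forall k, continuous (fun s => x s ^ k) t).
  { induction k as [| k IHk]; simpl.
    - apply continuous_const.
    - now apply (continuous_mult (K := R_AbsRing)). }
  induction n as [| n IHn]; [exact (Hpow 0%nat) |].
  exact (continuous_plus (V := R_NormedModule) _ _ _ IHn (Hpow (S n))).
Qed.

Lemma geom_sum_ge_1 x n : 0 <= x -> 1 <= sum_f_R0 (fun k => x ^ k) n.
Proof.
  intro Hx. induction n as [| n IHn]; simpl; [lra |].
  pose proof (pow_le x (S n) Hx). simpl in *. lra.
Qed.

Lemma is_derive_logistic_complement (x : R -> R) t g :
  is_derive x t (x t * (1 - x t) * g) ->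
  is_derive (fun s => 1 - x s) t ((1 - x t) * (1 - (1 - x t)) * - g).
Proof.
  intro Hx.
  pose proof (is_derive_minus (fun _ => 1) x t zero _ (is_derive_const 1 t) Hx) as H1x.
  replace ((1 - x t) * (1 - (1 - x t)) * - g) with (minus (zero : R) (x t * (1 - x t) * g));
    [exact H1x |].
  unfold minus, plus, opp, zero; simpl. ring.
Qed.

Lemma is_derive_lower_bound (x dx : R -> R) t0 t m : 0 < t0 <= t ->
  (forall s, 0 < s -> is_derive x s (dx s)) ->
  (forall s, t0 <= s <= t -> m <= dx s) -> x t0 + m * (t - t0) <= x t.
Proof.
  intros Ht Hd Hm.
  destruct (MVT_gen x t0 t dx) as [s [Hs Heq]];
    rewrite ?Rmin_left, ?Rmax_right in * by lra.
  - intros s Hs. apply Hd. lra.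
  - intros s Hs. apply continuity_pt_filterlim, (is_derive_continuous _ _ _ (Hd s ltac:(lra))).
  - specialize (Hm s Hs). nra.
Qed.

(* Integrating factor: [x exp (- int_t0^t h)] has zero derivative. *)
Lemma linear_rate_preserves_pos (x h : R -> R) t0 : 0 < t0 ->
  (forall t, 0 < t -> is_derive x t (x t * h t)) ->
  (forall t, 0 < t -> continuous h t) -> 0 < x t0 -> forall t, 0 < t -> 0 < x t.
Proof.
  intros Ht0 Hd Hh Hx0 t Ht.
  set (G := fun s => RInt h t0 s).
  assert (HG : forall s, 0 < s -> is_derive G s (h s)).
  { intros s Hs. apply (is_derive_RInt h G t0 s); [| now apply Hh].
    exists (mkposreal s Hs). intros y Hy.
    apply (RInt_correct (V := R_CompleteNormedModule)).
    apply (ex_RInt_continuous (V := R_CompleteNormedModule)). intros z Hz.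
    apply Hh. cbn in Hy. unfold ball in Hy; cbn in Hy.
    unfold AbsRing_ball, abs, minus, plus, opp in Hy; cbn in Hy.
    apply Rabs_def2 in Hy. pose proof (Rmin_glb_lt t0 y 0). lra. }
  set (F := fun s => x s * exp (- G s)).
  assert (HF : forall s, 0 < s -> is_derive F s 0).
  { intros s Hs. evar (l : R).
    assert (Hl : is_derive F s l).
    { apply (is_derive_mult x (fun s => exp (- G s))); [now apply Hd | | apply Rmult_comm].
      apply (is_derive_comp exp (fun s => - G s)); [apply is_derive_exp |].
      apply (is_derive_opp G). now apply HG. }
    subst l. match type of Hl with is_derive _ _ ?v => replace 0 with v; [exact Hl |] end.
    unfold plus, mult, scal, opp; simpl. unfold mult; simpl. ring. }
  assert (HFt : F t = F t0).
  { destruct (Rtotal_order t t0) as [Hlt | [-> | Hgt]]; [| reflexivity |].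
    - apply eq_is_derive; [intros s Hs; apply HF |]; lra.
    - symmetry. apply eq_is_derive; [intros s Hs; apply HF |]; lra. }
  unfold F, G in HFt. rewrite RInt_point in HFt. change (zero : R) with 0 in HFt.
  rewrite Ropp_0, exp_0, Rmult_1_r in HFt.
  pose proof (exp_pos (- RInt h t0 t)). nra.
Qed.

Lemma logistic_unit_interval_invariant (x g : R -> R) t0 : 0 < t0 ->
  (forall t, 0 < t -> is_derive x t (x t * (1 - x t) * g t)) ->
  (forall t, 0 < t -> continuous g t) -> 0 < x t0 < 1 ->
  forall t, 0 < t -> 0 < x t < 1.
Proof.
  intros Ht0 Hd Hg Hx0.
  assert (Hx : forall t, 0 < t -> continuous x t)
    by (intros t Ht; exact (is_derive_continuous _ _ _ (Hd t Ht))).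
  assert (Hpos : forall t, 0 < t -> 0 < x t).
  { apply (linear_rate_preserves_pos x (fun t => (1 - x t) * g t) t0); [easy | | | lra].
    - intros t Ht. rewrite <- Rmult_assoc. now apply Hd.
    - intros t Ht. apply (continuous_mult (K := R_AbsRing)); [| now apply Hg].
      apply (continuous_minus (V := R_NormedModule)); [apply continuous_const | now apply Hx]. }
  assert (Hlt1 : forall t, 0 < t -> 0 < 1 - x t).
  { apply (linear_rate_preserves_pos (fun t => 1 - x t) (fun t => (1 - (1 - x t)) * - g t) t0);
      [easy | | | lra].
    - intros t Ht. rewrite <- Rmult_assoc. now apply is_derive_logistic_complement, Hd.
    - intros t Ht. apply (continuous_mult (K := R_AbsRing)).
      + apply (continuous_minus (V := R_NormedModule)); [apply continuous_const |].
        apply (continuous_minus (V := R_NormedModule)); [apply continuous_const | now apply Hx].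
      + apply (continuous_opp (V := R_NormedModule)). now apply Hg. }
  intros t Ht. specialize (Hpos t Ht). specialize (Hlt1 t Ht). lra.
Qed.

Lemma logistic_is_lim_1 (x g : R -> R) m : 0 < m ->
  (forall t, 0 < t -> is_derive x t (x t * (1 - x t) * g t)) ->
  (forall t, 0 < t -> 0 < x t < 1) ->
  Rbar_locally p_infty (fun t => m <= g t) -> is_lim x p_infty 1.
Proof.
  intros Hm Hd Hx [M Hg].
  assert (HT : exists T, 0 < T /\ M < T).
  { exists (Rmax 1 (M + 1)). pose proof (Rmax_l 1 (M + 1)). pose proof (Rmax_r 1 (M + 1)).
    split; lra. }
  destruct HT as (T & HT0 & HMT).
  set (dx := fun u => x u * (1 - x u) * g u).
  assert (Hmono : forall s t, T <= s <= t -> x s <= x t).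
  { intros s t Hst.
    enough (x s + 0 * (t - s) <= x t) by lra.
    apply (is_derive_lower_bound x dx); [lra | exact Hd |].
    intros u Hu. specialize (Hx u ltac:(lra)). specialize (Hg u ltac:(lra)).
    unfold dx. apply Rmult_le_pos; [apply Rmult_le_pos |]; lra. }
  apply is_lim_spec. intro eps. pose proof (cond_pos eps) as Heps.
  pose proof (Hx T ltac:(lra)) as HxT.
  set (r := x T * eps * m).
  assert (Hr : 0 < r) by (unfold r; apply Rmult_lt_0_compat; [apply Rmult_lt_0_compat |]; lra).
  exists (T + / r). intros t Ht.
  assert (Hinv : 0 < / r) by (apply Rinv_0_lt_compat; exact Hr).
  pose proof (Hx t ltac:(lra)) as Hxt.
  destruct (Rlt_dec (1 - eps) (x t)) as [Hclose | Hfar].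
  { rewrite Rabs_left1 by lra. lra. }
  exfalso.
  (* While [x <= 1 - eps], the rate [x (1 - x) g] is at least [x T * eps * m]. *)
  assert (Hgrowth : x T + r * (t - T) <= x t).
  { apply (is_derive_lower_bound x dx); [lra | exact Hd |].
    intros u Hu. specialize (Hg u ltac:(lra)).
    assert (HxTu : x T <= x u) by (apply Hmono; lra).
    assert (Hxut : x u <= x t) by (apply Hmono; lra).
    unfold r, dx. apply Rmult_le_compat; try lra.
    - apply Rmult_le_pos; lra.
    - apply Rmult_le_compat; lra. }
  assert (Hbig : r * (t - T) > 1).
  { replace 1 with (r * / r) by (field; lra). apply Rmult_lt_compat_l; lra. }
  lra.
Qed.

Section DoubleGoodsGame.

Variables (n : nat) (ba bv c : R) (p q : R -> R).
Hypothesis Hsol : is_solution n ba bv c p q.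
Hypothesis Hp0 : 0 < p 0 < 1.
Hypothesis Hq0 : 0 < q 0 < 1.

Let N := INR (n + 1).

Lemma solution_p_unit_interval t : 0 < t -> 0 < p t < 1.
Proof.
  destruct Hsol as (Hpr & _ & Hdp & Hdq).
  destruct (at_right_0_unit_interval p Hpr Hp0) as (t0 & Ht0 & Hpt0).
  apply (logistic_unit_interval_invariant p (fun t => ba / N - q t * (bv - c)) t0); try easy.
  intros s Hs. apply (continuous_minus (V := R_NormedModule)); [apply continuous_const |].
  apply (continuous_mult (K := R_AbsRing)); [| apply continuous_const].
  exact (is_derive_continuous _ _ _ (Hdq s Hs)).
Qed.

Lemma solution_q_unit_interval t : 0 < t -> 0 < q t < 1.
Proof.
  destruct Hsol as (_ & Hqr & Hdp & Hdq).
  destruct (at_right_0_unit_interval q Hqr Hq0) as (t0 & Ht0 & Hqt0).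
  apply (logistic_unit_interval_invariant q
           (fun t => bv / N * sum_f_R0 (fun k => p t ^ k) n - c) t0); try easy.
  intros s Hs. apply (continuous_minus (V := R_NormedModule)); [| apply continuous_const].
  apply (continuous_mult (K := R_AbsRing)); [apply continuous_const |].
  exact (continuous_geom_sum _ _ _ (is_derive_continuous _ _ _ (Hdp s Hs))).
Qed.

Lemma glycolytic_takeover : 0 < ba -> ba > (bv - c) * N -> is_lim p p_infty 1.
Proof.
  intros Hba Hi. destruct Hsol as (_ & _ & Hdp & _).
  assert (HN : 0 < N) by (apply lt_0_INR; lia).
  set (a := ba / N). set (d := bv - c).
  assert (Ha : 0 < a) by (apply Rdiv_lt_0_compat; lra).
  assert (Hda : d < a) by (unfold a, d; apply Rlt_div_r; lra).
  apply (logistic_is_lim_1 p (fun t => a - q t * d) (Rmin a (a - d))).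
  - apply Rmin_pos; lra.
  - exact Hdp.
  - exact solution_p_unit_interval.
  - exists 0. intros t Ht.
    (* [a - q d = (1 - q) a + q (a - d)] is a convex combination. *)
    pose proof (Rmin_l a (a - d)). pose proof (Rmin_r a (a - d)).
    pose proof (solution_q_unit_interval t Ht). nra.
Qed.

Lemma vegf_takeover_q : 0 < bv -> bv > c * N -> is_lim q p_infty 1.
Proof.
  intros Hbv Hk. destruct Hsol as (_ & _ & _ & Hdq).
  assert (HN : 0 < N) by (apply lt_0_INR; lia).
  assert (Hrate : c < bv / N) by (apply Rlt_div_r; lra).
  apply (logistic_is_lim_1 q (fun t => bv / N * sum_f_R0 (fun k => p t ^ k) n - c) (bv / N - c)).
  - lra.
  - exact Hdq.
  - exact solution_q_unit_interval.
  - exists 0. intros t Ht.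
    pose proof (solution_p_unit_interval t Ht).
    pose proof (geom_sum_ge_1 (p t) n ltac:(lra)).
    assert (Hbv_N : 0 < bv / N) by (apply Rdiv_lt_0_compat; lra).
    nra.
Qed.

Lemma vegf_takeover_p : 0 < ba -> ba < (bv - c) * N -> is_lim q p_infty 1 ->
  is_lim p p_infty 0.
Proof.
  intros Hba Hii Hq. destruct Hsol as (_ & _ & Hdp & _).
  assert (HN : 0 < N) by (apply lt_0_INR; lia).
  set (a := ba / N). set (d := bv - c).
  assert (Had : a < d) by (unfold a, d; apply Rlt_div_l; lra).
  assert (Hd0 : 0 < d) by (enough (0 < a) by lra; apply Rdiv_lt_0_compat; lra).
  assert (Hlim1p : is_lim (fun t => 1 - p t) p_infty 1).
  { apply (logistic_is_lim_1 (fun t => 1 - p t) (fun t => - (a - q t * d)) ((d - a) / 2)).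
    - lra.
    - intros t Ht. exact (is_derive_logistic_complement p t _ (Hdp t Ht)).
    - intros t Ht. pose proof (solution_p_unit_interval t Ht). lra.
    - assert (Heps : 0 < (d - a) / (2 * d)) by (apply Rdiv_lt_0_compat; lra).
      apply is_lim_spec in Hq. destruct (Hq (mkposreal _ Heps)) as [M HM].
      exists M. intros t Ht. specialize (HM t Ht). cbn in HM. apply Rabs_def2 in HM.
      assert (Hdist : (d - a) / (2 * d) * d = (d - a) / 2) by (field; lra).
      nra. }
  apply (is_lim_ext (fun t => 1 - (1 - p t))); [intro t; ring |].
  eapply is_lim_minus; [apply is_lim_const | exact Hlim1p |].
  unfold is_Rbar_minus, is_Rbar_plus; cbn. do 2 f_equal. ring.
Qed.

End DoubleGoodsGame.

Theorem mainTheorem4 (n : nat) (ba bv c : R) (p q : R -> R) :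
  (1 <= n)%nat -> 0 < ba -> 0 < bv -> 0 < c ->
  is_solution n ba bv c p q ->
  0 < p 0 < 1 -> 0 < q 0 < 1 ->
  (ba > (bv - c) * INR (n + 1) -> is_lim p p_infty 1) /\
  (ba < (bv - c) * INR (n + 1) -> bv > c * INR (n + 1) ->
     is_lim q p_infty 1 /\ is_lim p p_infty 0).
Proof.
  intros _ Hba Hbv _ Hsol Hp0 Hq0. split.
  - exact (glycolytic_takeover _ _ _ _ _ _ Hsol Hp0 Hq0 Hba).
  - intros Hii Hk.
    pose proof (vegf_takeover_q _ _ _ _ _ _ Hsol Hp0 Hq0 Hbv Hk) as Hq.
    split; [exact Hq |].
    exact (vegf_takeover_p _ _ _ _ _ _ Hsol Hp0 Hba Hii Hq).
Qed.
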